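(* Let $\mathfrak{F}$ be any tube $\boldsymbol{x}(u,\phi)=\boldsymbol{a}(u)+r\cos\phi\,\boldsymbol{h}(u)+r\sin\phi\,\boldsymbol{b}(u)$ in $\mathbb{E}^3$ about a regular unit-speed curve $\boldsymbol{a}$ of finite length with curvature $\kappa>0$, with $0<r<\min 1/|\kappa|$, and let $W$ be any open portion of $\mathfrak{F}$ on which $\cos\phi\neq0$ (equivalently $K\neq0$). Then there is no constant real $3\times3$ matrix $A$ such that the Gauss map $\boldsymbol{N}$ of $\mathfrak{F}$ satisfies $\Delta^{II}\boldsymbol{N}=A\boldsymbol{N}$ on $W$; i.e., every tube in $\mathbb{E}^3$ is of coordinate infinite type Gauss map with respect to the second fundamental form. *)

From Stdlib Require Import Reals.
From Coquelicot Require Import Coquelicot.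
Open Scope R_scope.

Definition V3 := (R * R * R)%type.
Definition mkV (x y z : R) : V3 := (x, y, z).
Definition c1 (v : V3) : R := fst (fst v).
Definition c2 (v : V3) : R := snd (fst v).
Definition c3 (v : V3) : R := snd v.
Definition vadd (v w : V3) : V3 := mkV (c1 v + c1 w) (c2 v + c2 w) (c3 v + c3 w).
Definition vscal (k : R) (v : V3) : V3 := mkV (k * c1 v) (k * c2 v) (k * c3 v).
Definition dot (v w : V3) : R := c1 v * c1 w + c2 v * c2 w + c3 v * c3 w.
Definition cross (v w : V3) : V3 :=
  mkV (c2 v * c3 w - c3 v * c2 w) (c3 v * c1 w - c1 v * c3 w) (c1 v * c2 w - c2 v * c1 w).
Definition vnorm (v : V3) : R := sqrt (dot v v).

Definition M3 := (V3 * V3 * V3)%type.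
Definition mapply (A : M3) (v : V3) : V3 :=
  mkV (dot (fst (fst A)) v) (dot (snd (fst A)) v) (dot (snd A) v).

Definition vder (f : R -> V3) (t : R) : V3 :=
  mkV (Derive (fun s => c1 (f s)) t) (Derive (fun s => c2 (f s)) t)
      (Derive (fun s => c3 (f s)) t).

Definition du (F : R -> R -> V3) (u p : R) : V3 := vder (fun s => F s p) u.
Definition dp (F : R -> R -> V3) (u p : R) : V3 := vder (fun q => F u q) p.
Definition pu (f : R -> R -> R) (u p : R) : R := Derive (fun s => f s p) u.
Definition pp (f : R -> R -> R) (u p : R) : R := Derive (fun q => f u q) p.

Definition smooth_on (f : R -> R) (al be : R) : Prop :=
  forall (n : nat) (t : R), al < t < be -> ex_derive (Derive_n f n) t.
Definition smooth_curve (a : R -> V3) (al be : R) : Prop :=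
  smooth_on (fun t => c1 (a t)) al be /\ smooth_on (fun t => c2 (a t)) al be /\
  smooth_on (fun t => c3 (a t)) al be.

Definition tangent (a : R -> V3) (u : R) : V3 := vder a u.
Definition curvature (a : R -> V3) (u : R) : R := vnorm (vder (vder a) u).
Definition pnormal (a : R -> V3) (u : R) : V3 :=
  vscal (/ curvature a u) (vder (vder a) u).
Definition binormal (a : R -> V3) (u : R) : V3 := cross (tangent a u) (pnormal a u).

Definition tube (a : R -> V3) (r : R) (u p : R) : V3 :=
  vadd (a u) (vadd (vscal (r * cos p) (pnormal a u)) (vscal (r * sin p) (binormal a u))).

Definition gauss (X : R -> R -> V3) (u p : R) : V3 :=
  let n := cross (du X u p) (dp X u p) in vscal (/ vnorm n) n.

Definition IIL (X : R -> R -> V3) (u p : R) : R := dot (du (du X) u p) (gauss X u p).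
Definition IIM (X : R -> R -> V3) (u p : R) : R := dot (dp (du X) u p) (gauss X u p).
Definition IIN (X : R -> R -> V3) (u p : R) : R := dot (dp (dp X) u p) (gauss X u p).
Definition detII (X : R -> R -> V3) (u p : R) : R :=
  IIL X u p * IIN X u p - IIM X u p ^ 2.

(* Laplace operator of the (nondegenerate) second fundamental form:
   Delta^II f = -1/sqrt|D| * sum_ij d_i ( sqrt|D| L^{ij} d_j f ),
   D = LN - M^2, (L^{ij}) = inverse of [[L, M], [M, N]]. *)
Definition laplaceII (X : R -> R -> V3) (f : R -> R -> R) (u p : R) : R :=
  let w := fun s q => sqrt (Rabs (detII X s q)) in
  let g11 := fun s q => IIN X s q / detII X s q in
  let g12 := fun s q => - IIM X s q / detII X s q in
  let g22 := fun s q => IIL X s q / detII X s q in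
  - / w u p *
    ( Derive (fun s => w s p * (g11 s p * pu f s p + g12 s p * pp f s p)) u
    + Derive (fun q => w u q * (g12 u q * pu f u q + g22 u q * pp f u q)) p ).

Definition laplaceII_vec (X : R -> R -> V3) (F : R -> R -> V3) (u p : R) : V3 :=
  mkV (laplaceII X (fun s q => c1 (F s q)) u p)
      (laplaceII X (fun s q => c2 (F s q)) u p)
      (laplaceII X (fun s q => c3 (F s q)) u p).

(* The Frenet equations give the Gauss map N = -(cos phi h + sin phi b) of the tube and its
   second fundamental form L = r tau^2 - d kappa cos phi, M = r tau, N = r, where
   d = 1 - r kappa cos phi > 0; so det II = -r d kappa cos phi does not vanish on W.
   Writing Delta^II as minus a divergence of two explicit fields, the binormal component of
   Delta^II N at a fixed u is  phi |-> sin phi (4 r kappa cos phi - 3) / (2 r d),  while the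
   binormal component of A N is some lam cos phi + mu sin phi.  Clearing denominators, their
   equality on an interval of phi makes a combination of sin phi cos phi, sin phi, cos phi and
   cos^2 phi vanish there; differentiating four times shows all its coefficients are zero.
   The coefficients of sin phi and sin phi cos phi then give 2 r mu = -3 and
   r kappa (4 + 2 r mu) = 0, i.e. r kappa = 0, which is absurd. *)

From Pilot Require Import Defs.
From Stdlib Require Import Reals Lra.
From Coquelicot Require Import Coquelicot.
Open Scope R_scope.

(* Coquelicot exports its own [c1]; re-import the vector coordinates. *)
Import Defs.

(** * One-variable calculus *)

Lemma locally_open_interval (al be s : R) :
  al < s < be -> locally s (fun t => al < t < be).
Proof.
  intros Hs. apply (open_and (fun t => al < t) (fun t => t < be)).
  - apply open_gt.
  - apply open_lt.
  - exact Hs.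
Qed.

Lemma locally_neq0_continuity_pt (f : R -> R) (x : R) :
  continuity_pt f x -> f x <> 0 -> locally x (fun t => f t <> 0).
Proof.
  intros Hc Hx.
  assert (Hp : 0 < Rabs (f x)) by (apply Rabs_pos_lt; exact Hx).
  destruct (proj1 (continuity_pt_locally f x) Hc (mkposreal _ Hp)) as [e He].
  exists e. intros y Hy Hfy. specialize (He y Hy). simpl in He.
  rewrite Hfy, Rminus_0_l, Rabs_Ropp in He. lra.
Qed.

Lemma is_derive_locally_const (f : R -> R) (x k l : R) :
  locally x (fun t => f t = k) -> is_derive f x l -> l = 0.
Proof.
  intros Hk Hf.
  assert (Hc : is_derive (fun _ : R => k) x l).
  { apply (is_derive_ext_loc f (fun _ : R => k)); assumption. }
  rewrite <- (is_derive_unique _ _ _ Hc). apply Derive_const.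
Qed.

Lemma is_derive_vanishes_on_ball (f f' : R -> R) (x0 : R) (eps : posreal) :
  (forall q, Rabs (q - x0) < eps -> f q = 0) ->
  (forall q, is_derive f q (f' q)) ->
  forall q, Rabs (q - x0) < eps -> f' q = 0.
Proof.
  intros Hf Hd q Hq. apply (is_derive_locally_const f q 0); [|apply Hd].
  assert (Hq' : x0 - eps < q < x0 + eps) by (apply Rabs_def2 in Hq; lra).
  eapply filter_imp; [|exact (locally_open_interval _ _ q Hq')].
  intros t Ht. apply Hf. apply Rabs_def1; lra.
Qed.

Lemma is_derive_sqrt_Rabs (f : R -> R) (x df : R) :
  is_derive f x df -> f x <> 0 ->
  is_derive (fun t => sqrt (Rabs (f t))) x (sqrt (Rabs (f x)) * df / (2 * f x)).
Proof.
  intros Hf Hx.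
  assert (Habs : 0 < Rabs (f x)) by (apply Rabs_pos_lt; exact Hx).
  assert (Hsq : sqrt (Rabs (f x)) * sqrt (Rabs (f x)) = Rabs (f x))
    by (apply sqrt_sqrt; lra).
  assert (Hpos : 0 < sqrt (Rabs (f x))) by (apply sqrt_lt_R0; exact Habs).
  eapply is_derive_ext; [intros t; reflexivity|].
  replace (sqrt (Rabs (f x)) * df / (2 * f x))
    with (sign (f x) * df / (2 * sqrt (Rabs (f x)))).
  - apply (is_derive_sqrt (fun t => Rabs (f t))); [|exact Habs].
    apply is_derive_Rabs; assumption.
  - set (w := sqrt (Rabs (f x))) in *.
    destruct (Rlt_or_le 0 (f x)) as [Hgt | Hle].
    + rewrite sign_eq_1 by exact Hgt. rewrite Rabs_right in Hsq by lra.
      rewrite <- Hsq. field. lra.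
    + rewrite sign_eq_m1 by lra. rewrite Rabs_left in Hsq by lra.
      replace (f x) with (- (w * w)) by lra. field. lra.
Qed.

Lemma cos2_plus_sin2 (q : R) : cos q * cos q + sin q * sin q = 1.
Proof. pose proof (sin2_cos2 q) as E. unfold Rsqr in E. lra. Qed.

(** * Vector calculus in E^3 *)

Lemma V3_ext (v w : V3) : c1 v = c1 w -> c2 v = c2 w -> c3 v = c3 w -> v = w.
Proof.
  destruct v as [[x y] z], w as [[x' y'] z']. cbn [c1 c2 c3 fst snd]. intros -> -> ->. reflexivity.
Qed.

Ltac vec_unfold := unfold dot, cross, vadd, vscal, mkV, c1, c2, c3; cbn [fst snd].

(* Derivatives produce goals over Coquelicot's [R_AbsRing], which [ring] does not
   recognize as [R]. *)
Ltac real_ring := match goal with |- @eq _ ?x ?y => change (@eq R x y) end; ring.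
Ltac vec_ring := apply V3_ext; vec_unfold; real_ring.

Lemma dot_comm (v w : V3) : dot v w = dot w v.
Proof. unfold dot; ring. Qed.

Lemma dot_vaddl (u v w : V3) : dot (vadd u v) w = dot u w + dot v w.
Proof. vec_unfold; ring. Qed.

Lemma dot_vscall (k : R) (v w : V3) : dot (vscal k v) w = k * dot v w.
Proof. vec_unfold; ring. Qed.

Lemma dot_self_ge0 (v : V3) : 0 <= dot v v.
Proof. destruct v as [[x y] z]; vec_unfold; nra. Qed.

Lemma orthonormal_decomp (e1 e2 v : V3) :
  dot e1 e1 = 1 -> dot e2 e2 = 1 -> dot e1 e2 = 0 ->
  v = vadd (vscal (dot v e1) e1)
        (vadd (vscal (dot v e2) e2) (vscal (dot v (cross e1 e2)) (cross e1 e2))).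
Proof.
  intros H11 H22 H12.
  (* the general identity, with the Gram determinant of e1 e2 as factor *)
  assert (Gram : vscal (dot e1 e1 * dot e2 e2 - dot e1 e2 ^ 2) v =
    vadd (vscal (dot v e1) (vadd (vscal (dot e2 e2) e1) (vscal (- dot e1 e2) e2)))
      (vadd (vscal (dot v e2) (vadd (vscal (dot e1 e1) e2) (vscal (- dot e1 e2) e1)))
        (vscal (dot v (cross e1 e2)) (cross e1 e2)))).
  { destruct e1 as [[? ?] ?], e2 as [[? ?] ?], v as [[? ?] ?]. vec_ring. }
  rewrite H11, H22, H12 in Gram.
  transitivity (vscal (1 * 1 - 0 ^ 2) v); [vec_ring|]. rewrite Gram. vec_ring.
Qed.

Definition is_vder (f : R -> V3) (t : R) (v : V3) : Prop :=
  is_derive (fun s => c1 (f s)) t (c1 v) /\ is_derive (fun s => c2 (f s)) t (c2 v) /\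
  is_derive (fun s => c3 (f s)) t (c3 v).

Lemma is_vder_unique (f : R -> V3) (t : R) (v : V3) : is_vder f t v -> vder f t = v.
Proof.
  intros (H1 & H2 & H3). unfold vder.
  apply V3_ext; simpl; apply is_derive_unique; assumption.
Qed.

Lemma is_vder_ext_loc (f g : R -> V3) (t : R) (v : V3) :
  locally t (fun s => f s = g s) -> is_vder f t v -> is_vder g t v.
Proof.
  intros Hfg (H1 & H2 & H3).
  split; [|split]; (eapply is_derive_ext_loc; [|eassumption]);
    (eapply filter_imp; [|exact Hfg]); intros s ->; reflexivity.
Qed.

Lemma is_vder_ext (f g : R -> V3) (t : R) (v w : V3) :
  (forall s, f s = g s) -> is_vder f t v -> v = w -> is_vder g t w.
Proof.
  intros Hfg Hf <-. apply (is_vder_ext_loc f); [|exact Hf].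
  exists (mkposreal 1 Rlt_0_1). intros; apply Hfg.
Qed.

Lemma is_vder_const (k : V3) (t : R) : is_vder (fun _ => k) t (mkV 0 0 0).
Proof. split; [|split]; exact (is_derive_const _ t). Qed.

Lemma is_vder_add (f g : R -> V3) (t : R) (v w : V3) :
  is_vder f t v -> is_vder g t w -> is_vder (fun s => vadd (f s) (g s)) t (vadd v w).
Proof.
  intros (F1 & F2 & F3) (G1 & G2 & G3).
  split; [|split].
  - exact (is_derive_plus _ _ _ _ _ F1 G1).
  - exact (is_derive_plus _ _ _ _ _ F2 G2).
  - exact (is_derive_plus _ _ _ _ _ F3 G3).
Qed.

Lemma is_vder_scal (k : R -> R) (f : R -> V3) (t dk : R) (v : V3) :
  is_derive k t dk -> is_vder f t v ->
  is_vder (fun s => vscal (k s) (f s)) t (vadd (vscal dk (f t)) (vscal (k t) v)).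
Proof.
  intros Hk (F1 & F2 & F3).
  split; [|split].
  - exact (is_derive_mult _ _ _ _ _ Hk F1 Rmult_comm).
  - exact (is_derive_mult _ _ _ _ _ Hk F2 Rmult_comm).
  - exact (is_derive_mult _ _ _ _ _ Hk F3 Rmult_comm).
Qed.

Lemma is_vder_scal_const (k : R) (f : R -> V3) (t : R) (v : V3) :
  is_vder f t v -> is_vder (fun s => vscal k (f s)) t (vscal k v).
Proof.
  intros Hf. eapply is_vder_ext; [intros s; reflexivity| |].
  - exact (is_vder_scal (fun _ => k) f t 0 v (is_derive_const k t) Hf).
  - vec_ring.
Qed.

Lemma is_vder_cross (f g : R -> V3) (t : R) (v w : V3) :
  is_vder f t v -> is_vder g t w ->
  is_vder (fun s => cross (f s) (g s)) t (vadd (cross v (g t)) (cross (f t) w)).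
Proof.
  intros (F1 & F2 & F3) (G1 & G2 & G3).
  assert (Hminor : forall (f1 g1 f2 g2 : R -> R) d1 e1 d2 e2 l,
    is_derive f1 t d1 -> is_derive g1 t e1 -> is_derive f2 t d2 -> is_derive g2 t e2 ->
    l = d1 * g1 t + f1 t * e1 - (d2 * g2 t + f2 t * e2) ->
    is_derive (fun s => f1 s * g1 s - f2 s * g2 s) t l).
  { intros f1 g1 f2 g2 d1 e1 d2 e2 l H1 H2 H3 H4 ->.
    exact (is_derive_minus _ _ _ _ _ (is_derive_mult _ _ _ _ _ H1 H2 Rmult_comm)
             (is_derive_mult _ _ _ _ _ H3 H4 Rmult_comm)). }
  split; [|split].
  - apply (Hminor _ _ _ _ _ _ _ _ _ F2 G3 F3 G2). vec_unfold; ring.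
  - apply (Hminor _ _ _ _ _ _ _ _ _ F3 G1 F1 G3). vec_unfold; ring.
  - apply (Hminor _ _ _ _ _ _ _ _ _ F1 G2 F2 G1). vec_unfold; ring.
Qed.

Lemma is_derive_dot (f g : R -> V3) (t : R) (v w : V3) :
  is_vder f t v -> is_vder g t w ->
  is_derive (fun s => dot (f s) (g s)) t (dot v (g t) + dot (f t) w).
Proof.
  intros (F1 & F2 & F3) (G1 & G2 & G3).
  pose proof (is_derive_mult _ _ _ _ _ F1 G1 Rmult_comm) as H1.
  pose proof (is_derive_mult _ _ _ _ _ F2 G2 Rmult_comm) as H2.
  pose proof (is_derive_mult _ _ _ _ _ F3 G3 Rmult_comm) as H3.
  pose proof (is_derive_plus _ _ _ _ _ (is_derive_plus _ _ _ _ _ H1 H2) H3) as H.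
  eapply is_derive_ext; [intros s; reflexivity|].
  replace (dot v (g t) + dot (f t) w) with
    (c1 v * c1 (g t) + c1 (f t) * c1 w + (c2 v * c2 (g t) + c2 (f t) * c2 w)
     + (c3 v * c3 (g t) + c3 (f t) * c3 w)) by (unfold dot; ring).
  exact H.
Qed.

Definition is_coordinate (pr : V3 -> R) : Prop :=
  (forall v w, pr (vadd v w) = pr v + pr w) /\ (forall k v, pr (vscal k v) = k * pr v) /\
  (forall F t v, is_vder F t v -> is_derive (fun s => pr (F s)) t (pr v)).

Lemma is_coordinate_c1 : is_coordinate c1.
Proof.
  split; [|split]; [intros; reflexivity | intros; reflexivity |].
  intros F t v (H & _ & _). exact H.
Qed.

Lemma is_coordinate_c2 : is_coordinate c2.
Proof.
  split; [|split]; [intros; reflexivity | intros; reflexivity |].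
  intros F t v (_ & H & _). exact H.
Qed.

Lemma is_coordinate_c3 : is_coordinate c3.
Proof.
  split; [|split]; [intros; reflexivity | intros; reflexivity |].
  intros F t v (_ & _ & H). exact H.
Qed.

Lemma Derive_coordinate_loc (pr : V3 -> R) (g : R -> R) (F : R -> V3) (t : R) (v : V3) :
  is_coordinate pr -> locally t (fun s => g s = pr (F s)) -> is_vder F t v ->
  Derive g t = pr v.
Proof.
  intros (_ & _ & Hder) Hloc HF. apply is_derive_unique.
  apply (is_derive_ext_loc (fun s => pr (F s))); [|exact (Hder _ _ _ HF)].
  eapply filter_imp; [|exact Hloc]. intros s ->. reflexivity.
Qed.

(** * The Frenet frame and the tube *)

Definition torsion (a : R -> V3) (s : R) : R := dot (vder (pnormal a) s) (binormal a s).

Definition frame (a : R -> V3) (s x y z : R) : V3 :=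
  vadd (vscal x (tangent a s)) (vadd (vscal y (pnormal a s)) (vscal z (binormal a s))).

Definition tube_normal (a : R -> V3) (s q : R) : V3 :=
  vadd (vscal (cos q) (pnormal a s)) (vscal (sin q) (binormal a s)).

Definition tube_normal_dphi (a : R -> V3) (s q : R) : V3 :=
  vadd (vscal (- sin q) (pnormal a s)) (vscal (cos q) (binormal a s)).

(* |x_u x x_phi| = r * tube_factor *)
Definition tube_factor (a : R -> V3) (r s q : R) : R := 1 - r * curvature a s * cos q.

Definition tube_detII (a : R -> V3) (r s q : R) : R :=
  - (r * tube_factor a r s q * curvature a s * cos q).

(* Closed forms of the two fields [sqrt|D| (L^1j d_j f)] and [sqrt|D| (L^2j d_j f)] whose
   divergence defines [laplaceII], for f the Gauss map of the tube. *)
Definition flux_u (a : R -> V3) (r p t : R) : V3 :=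
  vscal (- sqrt (Rabs (tube_detII a r t p)) / tube_factor a r t p) (tangent a t).

Definition flux_phi (a : R -> V3) (r u q : R) : V3 :=
  vscal (sqrt (Rabs (tube_detII a r u q)))
    (vadd (vscal (torsion a u / tube_factor a r u q) (tangent a u))
          (vscal (- / r) (tube_normal_dphi a u q))).

Section Tube.
Variables (a : R -> V3) (al be : R).
Hypothesis a_smooth : smooth_curve a al be.
Hypothesis a_unit_speed : forall u, al < u < be -> vnorm (vder a u) = 1.
Hypothesis a_curved : forall u, al < u < be -> 0 < curvature a u.

Local Notation T := (tangent a).
Local Notation P := (pnormal a).
Local Notation B := (binormal a).
Local Notation kappa := (curvature a).
Local Notation tau := (torsion a).
Local Notation a2 := (vder (vder a)).
Local Notation a3 := (vder (vder (vder a))).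

Lemma iter_vder_coords (n : nat) (t : R) :
  c1 (Nat.iter n vder a t) = Derive_n (fun s => c1 (a s)) n t /\
  c2 (Nat.iter n vder a t) = Derive_n (fun s => c2 (a s)) n t /\
  c3 (Nat.iter n vder a t) = Derive_n (fun s => c3 (a s)) n t.
Proof.
  revert t; induction n as [|n IH]; intros t; [repeat split|].
  cbn [Nat.iter Derive_n]. unfold vder at 1. cbn [c1 c2 c3 mkV fst snd].
  split; [|split]; apply Derive_ext; intros s; apply IH.
Qed.

Lemma is_vder_iter_vder (n : nat) (s : R) :
  al < s < be -> is_vder (Nat.iter n vder a) s (Nat.iter (S n) vder a s).
Proof.
  intros Hs. destruct a_smooth as (S1 & S2 & S3).
  split; [|split]; apply Derive_correct;
    (eapply ex_derive_ext; [intros t; symmetry; apply (iter_vder_coords n t)|]).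
  - exact (S1 n s Hs).
  - exact (S2 n s Hs).
  - exact (S3 n s Hs).
Qed.

Lemma tangent_unit (s : R) : al < s < be -> dot (T s) (T s) = 1.
Proof.
  intros Hs. pose proof (a_unit_speed s Hs) as H. unfold vnorm in H.
  rewrite <- (sqrt_sqrt (dot (T s) (T s))) by apply dot_self_ge0.
  unfold tangent. rewrite H. ring.
Qed.

Lemma curvature_sqr (s : R) : kappa s * kappa s = dot (a2 s) (a2 s).
Proof. apply sqrt_sqrt, dot_self_ge0. Qed.

Lemma is_derive_curvature (s : R) :
  al < s < be -> is_derive kappa s (dot (a2 s) (a3 s) / kappa s).
Proof.
  intros Hs. pose proof (a_curved s Hs) as Hk.
  assert (H2 : 0 < dot (a2 s) (a2 s)) by (rewrite <- curvature_sqr; nra).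
  pose proof (is_derive_dot _ _ _ _ _ (is_vder_iter_vder 2 s Hs) (is_vder_iter_vder 2 s Hs)) as Hd.
  eapply is_derive_ext; [intros t; reflexivity|].
  replace (dot (a2 s) (a3 s) / kappa s)
    with ((dot (a3 s) (a2 s) + dot (a2 s) (a3 s)) / (2 * sqrt (dot (a2 s) (a2 s)))).
  - exact (is_derive_sqrt _ _ _ Hd H2).
  - change (sqrt (dot (a2 s) (a2 s))) with (kappa s). rewrite (dot_comm (a3 s)). field. lra.
Qed.

Lemma acceleration_eq (s : R) : al < s < be -> a2 s = vscal (kappa s) (P s).
Proof.
  intros Hs. pose proof (a_curved s Hs). unfold pnormal.
  apply V3_ext; vec_unfold; field; lra.
Qed.

Lemma pnormal_unit (s : R) : al < s < be -> dot (P s) (P s) = 1.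
Proof.
  intros Hs. pose proof (a_curved s Hs). unfold pnormal.
  rewrite dot_vscall, dot_comm, dot_vscall, <- curvature_sqr. field. lra.
Qed.

Lemma tangent_pnormal_orth (s : R) : al < s < be -> dot (T s) (P s) = 0.
Proof.
  intros Hs.
  assert (H : dot (a2 s) (T s) + dot (T s) (a2 s) = 0).
  { apply (is_derive_locally_const (fun t => dot (T t) (T t)) s 1).
    - eapply filter_imp; [|exact (locally_open_interval al be s Hs)].
      intros t Ht. apply tangent_unit, Ht.
    - exact (is_derive_dot _ _ _ _ _ (is_vder_iter_vder 1 s Hs) (is_vder_iter_vder 1 s Hs)). }
  rewrite (dot_comm (a2 s)) in H. unfold pnormal.
  rewrite dot_comm, dot_vscall, dot_comm.
  replace (dot (T s) (a2 s)) with 0 by lra. ring.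
Qed.

Lemma tangent_binormal_orth (s : R) : dot (T s) (B s) = 0.
Proof. unfold binormal. vec_unfold. ring. Qed.

Lemma pnormal_binormal_orth (s : R) : dot (P s) (B s) = 0.
Proof. unfold binormal. vec_unfold. ring. Qed.

Lemma binormal_unit (s : R) : al < s < be -> dot (B s) (B s) = 1.
Proof.
  intros Hs. unfold binormal.
  replace (dot (cross (T s) (P s)) (cross (T s) (P s)))
    with (dot (T s) (T s) * dot (P s) (P s) - dot (T s) (P s) ^ 2) by (vec_unfold; ring).
  rewrite tangent_unit, pnormal_unit, tangent_pnormal_orth by exact Hs. ring.
Qed.

Lemma dot_frame (s x1 y1 z1 x2 y2 z2 : R) : al < s < be ->
  dot (frame a s x1 y1 z1) (frame a s x2 y2 z2) = x1 * x2 + y1 * y2 + z1 * z2.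
Proof.
  intros Hs.
  replace (dot (frame a s x1 y1 z1) (frame a s x2 y2 z2)) with
    (x1 * x2 * dot (T s) (T s) + y1 * y2 * dot (P s) (P s) + z1 * z2 * dot (B s) (B s)
     + (x1 * y2 + y1 * x2) * dot (T s) (P s) + (x1 * z2 + z1 * x2) * dot (T s) (B s)
     + (y1 * z2 + z1 * y2) * dot (P s) (B s)) by (unfold frame; vec_unfold; ring).
  rewrite tangent_unit, pnormal_unit, binormal_unit, tangent_pnormal_orth by exact Hs.
  rewrite tangent_binormal_orth, pnormal_binormal_orth. ring.
Qed.

Lemma is_vder_curve (s : R) : al < s < be -> is_vder a s (T s).
Proof. exact (is_vder_iter_vder 0 s). Qed.

Lemma is_vder_tangent (s : R) : al < s < be -> is_vder T s (vscal (kappa s) (P s)).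
Proof. intros Hs. rewrite <- acceleration_eq by exact Hs. exact (is_vder_iter_vder 1 s Hs). Qed.

(* The derivative of [a'' / kappa], in a form that can be differentiated once more. *)
Definition pnormal_der (s : R) : V3 :=
  vadd (vscal (- (dot (a2 s) (a3 s) / kappa s) / kappa s ^ 2) (a2 s)) (vscal (/ kappa s) (a3 s)).

Lemma is_vder_pnormal_der (s : R) : al < s < be -> is_vder P s (pnormal_der s).
Proof.
  intros Hs. pose proof (a_curved s Hs).
  apply (is_vder_scal (fun t => / kappa t) a2).
  - apply is_derive_inv; [apply is_derive_curvature, Hs | lra].
  - exact (is_vder_iter_vder 2 s Hs).
Qed.

Lemma pnormal_der_frenet (s : R) : al < s < be ->
  pnormal_der s = vadd (vscal (- kappa s) (T s)) (vscal (tau s) (B s)).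
Proof.
  intros Hs.
  assert (HT : dot (pnormal_der s) (T s) = - kappa s).
  { assert (H : dot (pnormal_der s) (T s) + dot (P s) (a2 s) = 0).
    { apply (is_derive_locally_const (fun t => dot (P t) (T t)) s 0).
      - eapply filter_imp; [|exact (locally_open_interval al be s Hs)].
        intros t Ht. rewrite dot_comm. apply tangent_pnormal_orth, Ht.
      - exact (is_derive_dot _ _ _ _ _ (is_vder_pnormal_der s Hs) (is_vder_iter_vder 1 s Hs)). }
    rewrite acceleration_eq in H by exact Hs.
    rewrite (dot_comm (P s)), dot_vscall, pnormal_unit in H by exact Hs. lra. }
  assert (HP : dot (pnormal_der s) (P s) = 0).
  { assert (H : dot (pnormal_der s) (P s) + dot (P s) (pnormal_der s) = 0).
    { apply (is_derive_locally_const (fun t => dot (P t) (P t)) s 1).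
      - eapply filter_imp; [|exact (locally_open_interval al be s Hs)].
        intros t Ht. apply pnormal_unit, Ht.
      - exact (is_derive_dot _ _ _ _ _ (is_vder_pnormal_der s Hs) (is_vder_pnormal_der s Hs)). }
    rewrite (dot_comm (P s)) in H. lra. }
  assert (HB : dot (pnormal_der s) (B s) = tau s).
  { unfold torsion. rewrite (is_vder_unique _ _ _ (is_vder_pnormal_der s Hs)). reflexivity. }
  rewrite (orthonormal_decomp (T s) (P s) (pnormal_der s)) at 1
    by (apply tangent_unit || apply pnormal_unit || apply tangent_pnormal_orth; exact Hs).
  fold (B s). rewrite HT, HP, HB. vec_ring.
Qed.

Lemma is_vder_pnormal (s : R) : al < s < be ->
  is_vder P s (vadd (vscal (- kappa s) (T s)) (vscal (tau s) (B s))).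
Proof. intros Hs. rewrite <- pnormal_der_frenet by exact Hs. apply is_vder_pnormal_der, Hs. Qed.

Lemma tangent_cross_binormal (s : R) : al < s < be -> cross (T s) (B s) = vscal (-1) (P s).
Proof.
  intros Hs. unfold binormal.
  transitivity (vadd (vscal (dot (T s) (P s)) (T s)) (vscal (- dot (T s) (T s)) (P s)));
    [vec_ring|].
  rewrite tangent_unit, tangent_pnormal_orth by exact Hs. vec_ring.
Qed.

Lemma is_vder_binormal (s : R) : al < s < be -> is_vder B s (vscal (- tau s) (P s)).
Proof.
  intros Hs. eapply is_vder_ext; [intros t; reflexivity| |].
  - exact (is_vder_cross _ _ _ _ _ (is_vder_tangent s Hs) (is_vder_pnormal s Hs)).
  - transitivity (vscal (tau s) (cross (T s) (B s))); [vec_ring|].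
    rewrite tangent_cross_binormal by exact Hs. vec_ring.
Qed.

Lemma pnormal_der_differentiable (s : R) : al < s < be -> exists v, is_vder pnormal_der s v.
Proof.
  intros Hs. pose proof (a_curved s Hs).
  assert (Hquot : forall (d k : R -> R), ex_derive d s -> ex_derive k s -> k s <> 0 ->
    ex_derive (fun t => - (d t / k t) / k t ^ 2) s).
  { intros d k Hd Hk Hk0. auto_derive. rewrite Rmult_1_r. repeat split; auto with real. }
  assert (Hc : ex_derive (fun t => - (dot (a2 t) (a3 t) / kappa t) / kappa t ^ 2) s).
  { apply Hquot; [| eexists; apply is_derive_curvature, Hs | lra].
    eexists.
    exact (is_derive_dot _ _ _ _ _ (is_vder_iter_vder 2 s Hs) (is_vder_iter_vder 3 s Hs)). }
  eexists. apply is_vder_add.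
  - apply (is_vder_scal _ a2); [apply Derive_correct, Hc | exact (is_vder_iter_vder 2 s Hs)].
  - apply (is_vder_scal (fun t => / kappa t) a3).
    + apply is_derive_inv; [apply is_derive_curvature, Hs | lra].
    + exact (is_vder_iter_vder 3 s Hs).
Qed.

Lemma ex_derive_torsion (s : R) : al < s < be -> ex_derive tau s.
Proof.
  intros Hs. apply (ex_derive_ext_loc (fun t => dot (pnormal_der t) (B t))).
  - eapply filter_imp; [|exact (locally_open_interval al be s Hs)].
    intros t Ht. unfold torsion. rewrite (is_vder_unique _ _ _ (is_vder_pnormal_der t Ht)).
    reflexivity.
  - destruct (pnormal_der_differentiable s Hs) as [v Hv].
    eexists. exact (is_derive_dot _ _ _ _ _ Hv (is_vder_binormal s Hs)).
Qed.
Variable r : R.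
Hypothesis r_pos : 0 < r.
Hypothesis r_lt_radius : forall u, al < u < be -> r < / curvature a u.

Local Notation n := (tube_normal a).
Local Notation m := (tube_normal_dphi a).
Local Notation delta := (tube_factor a r).
Local Notation X := (tube a r).

Lemma tube_normal_frame (s q : R) : n s q = frame a s 0 (cos q) (sin q).
Proof. unfold tube_normal, frame. vec_ring. Qed.

Lemma tube_normal_dphi_frame (s q : R) : m s q = frame a s 0 (- sin q) (cos q).
Proof. unfold tube_normal_dphi, frame. vec_ring. Qed.

Lemma r_curvature_lt1 (s : R) : al < s < be -> r * kappa s < 1.
Proof.
  intros Hs. pose proof (a_curved s Hs) as Hk. pose proof (r_lt_radius s Hs) as Hr.
  apply (Rmult_lt_compat_r (kappa s)) in Hr; [|exact Hk]. rewrite Rinv_l in Hr by lra.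
  exact Hr.
Qed.

Lemma tube_factor_pos (s q : R) : al < s < be -> 0 < delta s q.
Proof.
  intros Hs. pose proof (r_curvature_lt1 s Hs). pose proof (a_curved s Hs).
  pose proof (COS_bound q). unfold tube_factor.
  assert (0 < r * kappa s) by (apply Rmult_lt_0_compat; assumption). nra.
Qed.

Lemma is_vder_tube_normal_u (s q : R) : al < s < be ->
  is_vder (fun t => n t q) s (vadd (vscal (- kappa s * cos q) (T s)) (vscal (tau s) (m s q))).
Proof.
  intros Hs. eapply is_vder_ext; [intros t; reflexivity | apply is_vder_add |].
  - exact (is_vder_scal_const _ _ _ _ (is_vder_pnormal s Hs)).
  - exact (is_vder_scal_const _ _ _ _ (is_vder_binormal s Hs)).
  - unfold tube_normal_dphi. vec_ring.
Qed.

Lemma is_vder_tube_normal_dphi_u (s q : R) : al < s < be ->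
  is_vder (fun t => m t q) s (vadd (vscal (kappa s * sin q) (T s)) (vscal (- tau s) (n s q))).
Proof.
  intros Hs. eapply is_vder_ext; [intros t; reflexivity | apply is_vder_add |].
  - exact (is_vder_scal_const _ _ _ _ (is_vder_pnormal s Hs)).
  - exact (is_vder_scal_const _ _ _ _ (is_vder_binormal s Hs)).
  - unfold tube_normal. vec_ring.
Qed.

Lemma is_vder_tube_normal_phi (s q : R) : is_vder (n s) q (m s q).
Proof.
  eapply is_vder_ext; [intros t; reflexivity | apply is_vder_add |].
  - exact (is_vder_scal _ _ _ _ _ (is_derive_cos q) (is_vder_const (P s) q)).
  - exact (is_vder_scal _ _ _ _ _ (is_derive_sin q) (is_vder_const (B s) q)).
  - unfold tube_normal_dphi. vec_ring.
Qed.

Lemma is_vder_tube_normal_dphi_phi (s q : R) : is_vder (m s) q (vscal (-1) (n s q)).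
Proof.
  eapply is_vder_ext; [intros t; reflexivity | apply is_vder_add |].
  - exact (is_vder_scal (fun t => - sin t) _ _ (- cos q) _
             (is_derive_opp _ _ _ (is_derive_sin q)) (is_vder_const (P s) q)).
  - exact (is_vder_scal _ _ _ _ _ (is_derive_cos q) (is_vder_const (B s) q)).
  - unfold tube_normal. vec_ring.
Qed.

Lemma tube_du (s q : R) : al < s < be ->
  du X s q = vadd (vscal (delta s q) (T s)) (vscal (r * tau s) (m s q)).
Proof.
  intros Hs. apply is_vder_unique.
  eapply is_vder_ext; [intros t; reflexivity | apply is_vder_add; [|apply is_vder_add] |].
  - exact (is_vder_curve s Hs).
  - exact (is_vder_scal_const _ _ _ _ (is_vder_pnormal s Hs)).
  - exact (is_vder_scal_const _ _ _ _ (is_vder_binormal s Hs)).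
  - unfold tube_factor, tube_normal_dphi. vec_ring.
Qed.

Lemma tube_dphi (s q : R) : dp X s q = vscal r (m s q).
Proof.
  apply is_vder_unique.
  assert (Hn : is_vder (fun t => vadd (a s) (vscal r (n s t))) q (vscal r (m s q))).
  { eapply is_vder_ext; [intros t; reflexivity | apply is_vder_add |].
    - exact (is_vder_const (a s) q).
    - exact (is_vder_scal_const _ _ _ _ (is_vder_tube_normal_phi s q)).
    - vec_ring. }
  eapply is_vder_ext; [|exact Hn|reflexivity].
  intros t. unfold tube, tube_normal. vec_ring.
Qed.

Lemma gauss_tube (s q : R) : al < s < be -> gauss X s q = vscal (-1) (n s q).
Proof.
  intros Hs. pose proof (tube_factor_pos s q Hs) as Hd. unfold gauss.
  rewrite tube_du, tube_dphi by exact Hs.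
  assert (Hcross : cross (vadd (vscal (delta s q) (T s)) (vscal (r * tau s) (m s q)))
                         (vscal r (m s q)) = vscal (- (r * delta s q)) (n s q)).
  { transitivity (vscal (r * delta s q) (cross (T s) (m s q))); [vec_ring|].
    unfold tube_normal_dphi.
    transitivity (vadd (vscal (r * delta s q * - sin q) (B s))
                   (vscal (r * delta s q * cos q) (cross (T s) (B s))));
      [unfold binormal; vec_ring|].
    rewrite tangent_cross_binormal by exact Hs. unfold tube_normal. vec_ring. }
  rewrite Hcross. cbv zeta.
  assert (Hnorm : vnorm (vscal (- (r * delta s q)) (n s q)) = r * delta s q).
  { unfold vnorm. rewrite dot_vscall, dot_comm, dot_vscall, tube_normal_frame, dot_frame
      by exact Hs.
    replace (0 * 0 + cos q * cos q + sin q * sin q) with 1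
      by (rewrite <- (cos2_plus_sin2 q); ring).
    replace (- (r * delta s q) * (- (r * delta s q) * 1))
      with ((r * delta s q) * (r * delta s q)) by ring.
    apply sqrt_square. nra. }
  rewrite Hnorm. apply V3_ext; vec_unfold; field; nra.
Qed.

Lemma is_vder_gauss_u (s q : R) : al < s < be ->
  is_vder (fun t => gauss X t q) s
    (vadd (vscal (kappa s * cos q) (T s)) (vscal (- tau s) (m s q))).
Proof.
  intros Hs. apply (is_vder_ext_loc (fun t => vscal (-1) (n t q))).
  - eapply filter_imp; [|exact (locally_open_interval al be s Hs)].
    intros t Ht. symmetry. apply gauss_tube, Ht.
  - eapply is_vder_ext; [intros t; reflexivity | |].
    + exact (is_vder_scal_const _ _ _ _ (is_vder_tube_normal_u s q Hs)).
    + vec_ring.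
Qed.

Lemma is_vder_gauss_phi (s q : R) : al < s < be ->
  is_vder (gauss X s) q (vscal (-1) (m s q)).
Proof.
  intros Hs. eapply is_vder_ext; [intros t; symmetry; apply gauss_tube, Hs | |].
  - exact (is_vder_scal_const _ _ _ _ (is_vder_tube_normal_phi s q)).
  - vec_ring.
Qed.

Lemma gauss_tube_frame (s q : R) : al < s < be ->
  gauss X s q = frame a s 0 (- cos q) (- sin q).
Proof. intros Hs. rewrite gauss_tube by exact Hs. unfold tube_normal, frame. vec_ring. Qed.

Lemma ex_derive_tube_factor_u (s q : R) : al < s < be -> ex_derive (fun t => delta t q) s.
Proof.
  intros Hs. assert (Hk : ex_derive kappa s) by (eexists; apply is_derive_curvature, Hs).
  unfold tube_factor. revert Hk. generalize kappa. intros k Hk. auto_derive. tauto.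
Qed.

Lemma IIL_tube (s q : R) : al < s < be ->
  IIL X s q = r * tau s ^ 2 - delta s q * kappa s * cos q.
Proof.
  intros Hs. unfold IIL, du at 1. rewrite gauss_tube_frame by exact Hs.
  destruct (ex_derive_tube_factor_u s q Hs) as [dd Hdd].
  destruct (ex_derive_torsion s Hs) as [dt Hdt].
  assert (Hrt : is_derive (fun t => r * tau t) s (0 * tau s + r * dt))
    by exact (is_derive_mult _ _ _ _ _ (is_derive_const r s) Hdt Rmult_comm).
  rewrite (is_vder_unique (fun t => du X t q) s
             (frame a s (dd + r * tau s * kappa s * sin q)
                (delta s q * kappa s - r * dt * sin q - r * tau s * tau s * cos q)
                (r * dt * cos q - r * tau s * tau s * sin q))).
  - rewrite dot_frame by exact Hs.
    replace (r * tau s ^ 2)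
      with (r * tau s ^ 2 * (cos q * cos q + sin q * sin q)) by (rewrite cos2_plus_sin2; ring).
    ring.
  - apply (is_vder_ext_loc (fun t => vadd (vscal (delta t q) (T t)) (vscal (r * tau t) (m t q)))).
    + eapply filter_imp; [|exact (locally_open_interval al be s Hs)].
      intros t Ht. symmetry. apply tube_du, Ht.
    + eapply is_vder_ext; [intros t; reflexivity | apply is_vder_add |].
      * exact (is_vder_scal _ _ _ _ _ Hdd (is_vder_tangent s Hs)).
      * exact (is_vder_scal _ _ _ _ _ Hrt (is_vder_tube_normal_dphi_u s q Hs)).
      * unfold frame, tube_normal, tube_normal_dphi. vec_ring.
Qed.

Lemma IIM_tube (s q : R) : al < s < be -> IIM X s q = r * tau s.
Proof.
  intros Hs. unfold IIM, dp at 1. rewrite gauss_tube_frame by exact Hs.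
  assert (Hd : is_derive (fun t => delta s t) q (r * kappa s * sin q))
    by (unfold tube_factor; auto_derive; [exact I | ring]).
  rewrite (is_vder_unique (fun t => du X s t) q
             (frame a s (r * kappa s * sin q) (- (r * tau s) * cos q) (- (r * tau s) * sin q))).
  - rewrite dot_frame by exact Hs.
    replace (r * tau s)
      with (r * tau s * (cos q * cos q + sin q * sin q)) at 3 by (rewrite cos2_plus_sin2; ring).
    ring.
  - eapply is_vder_ext; [intros t; symmetry; apply tube_du, Hs | apply is_vder_add |].
    + exact (is_vder_scal _ _ _ _ _ Hd (is_vder_const (T s) q)).
    + exact (is_vder_scal_const _ _ _ _ (is_vder_tube_normal_dphi_phi s q)).
    + unfold frame, tube_normal. vec_ring.
Qed.

Lemma IIN_tube (s q : R) : al < s < be -> IIN X s q = r.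
Proof.
  intros Hs. unfold IIN, dp at 1. rewrite gauss_tube_frame by exact Hs.
  rewrite (is_vder_unique (fun t => dp X s t) q (frame a s 0 (- r * cos q) (- r * sin q))).
  - rewrite dot_frame by exact Hs.
    replace r with (r * (cos q * cos q + sin q * sin q)) at 3 by (rewrite cos2_plus_sin2; ring).
    ring.
  - eapply is_vder_ext; [intros t; symmetry; apply tube_dphi | |].
    + exact (is_vder_scal_const _ _ _ _ (is_vder_tube_normal_dphi_phi s q)).
    + unfold frame, tube_normal. vec_ring.
Qed.

Lemma detII_tube (s q : R) : al < s < be -> detII X s q = tube_detII a r s q.
Proof.
  intros Hs. unfold detII, tube_detII.
  rewrite IIL_tube, IIM_tube, IIN_tube by exact Hs. ring.
Qed.

Lemma tube_detII_neq0 (s q : R) : al < s < be -> cos q <> 0 -> tube_detII a r s q <> 0.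
Proof.
  intros Hs Hc. pose proof (tube_factor_pos s q Hs). pose proof (a_curved s Hs).
  unfold tube_detII. apply Ropp_neq_0_compat.
  repeat apply Rmult_integral_contrapositive_currified; lra.
Qed.

Lemma pu_gauss_tube (pr : V3 -> R) (t q : R) : is_coordinate pr -> al < t < be ->
  pu (fun s q => pr (gauss X s q)) t q =
  pr (vadd (vscal (kappa t * cos q) (T t)) (vscal (- tau t) (m t q))).
Proof.
  intros (_ & _ & Hder) Ht. apply is_derive_unique, Hder, is_vder_gauss_u, Ht.
Qed.

Lemma pp_gauss_tube (pr : V3 -> R) (t q : R) : is_coordinate pr -> al < t < be ->
  pp (fun s q => pr (gauss X s q)) t q = pr (vscal (-1) (m t q)).
Proof.
  intros (_ & _ & Hder) Ht. apply is_derive_unique, Hder, is_vder_gauss_phi, Ht.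
Qed.

Lemma flux_u_eq (pr : V3 -> R) (p t : R) : is_coordinate pr -> al < t < be -> cos p <> 0 ->
  sqrt (Rabs (detII X t p)) *
    (IIN X t p / detII X t p * pu (fun s q => pr (gauss X s q)) t p
     + - IIM X t p / detII X t p * pp (fun s q => pr (gauss X s q)) t p)
  = pr (flux_u a r p t).
Proof.
  intros Hpr Ht Hc. pose proof Hpr as (Hadd & Hscal & _).
  rewrite pu_gauss_tube, pp_gauss_tube, detII_tube, IIN_tube, IIM_tube by assumption.
  unfold flux_u. repeat (rewrite Hadd || rewrite Hscal).
  pose proof (tube_factor_pos t p Ht). pose proof (a_curved t Ht).
  unfold tube_detII. field. repeat split; lra.
Qed.

Lemma flux_phi_eq (pr : V3 -> R) (u q : R) : is_coordinate pr -> al < u < be -> cos q <> 0 ->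
  sqrt (Rabs (detII X u q)) *
    (- IIM X u q / detII X u q * pu (fun s q => pr (gauss X s q)) u q
     + IIL X u q / detII X u q * pp (fun s q => pr (gauss X s q)) u q)
  = pr (flux_phi a r u q).
Proof.
  intros Hpr Hu Hc. pose proof Hpr as (Hadd & Hscal & _).
  rewrite pu_gauss_tube, pp_gauss_tube, detII_tube, IIL_tube, IIM_tube by assumption.
  unfold flux_phi. repeat (rewrite Hadd || rewrite Hscal).
  pose proof (tube_factor_pos u q Hu). pose proof (a_curved u Hu).
  unfold tube_detII. field. repeat split; lra.
Qed.

Lemma laplaceII_gauss_tube_coord (pr : V3 -> R) (u p : R) (d1 d2 : V3) :
  is_coordinate pr -> al < u < be -> cos p <> 0 ->
  is_vder (flux_u a r p) u d1 -> is_vder (flux_phi a r u) p d2 ->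
  laplaceII X (fun s q => pr (gauss X s q)) u p
  = - / sqrt (Rabs (tube_detII a r u p)) * pr (vadd d1 d2).
Proof.
  intros Hpr Hu Hc H1 H2. pose proof Hpr as (Hadd & _ & _).
  unfold laplaceII. cbv zeta. rewrite detII_tube, Hadd by exact Hu. f_equal. f_equal.
  - apply (Derive_coordinate_loc pr _ (flux_u a r p) _ _ Hpr); [|exact H1].
    eapply filter_imp; [|exact (locally_open_interval al be u Hu)].
    intros t Ht. apply flux_u_eq; assumption.
  - apply (Derive_coordinate_loc pr _ (flux_phi a r u) _ _ Hpr); [|exact H2].
    eapply filter_imp; [|exact (locally_neq0_continuity_pt cos p (continuity_cos p) Hc)].
    intros q Hq. apply flux_phi_eq; assumption.
Qed.

Lemma laplaceII_vec_gauss_tube (u p : R) (d1 d2 : V3) : al < u < be -> cos p <> 0 ->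
  is_vder (flux_u a r p) u d1 -> is_vder (flux_phi a r u) p d2 ->
  laplaceII_vec X (gauss X) u p = vscal (- / sqrt (Rabs (tube_detII a r u p))) (vadd d1 d2).
Proof.
  intros Hu Hc H1 H2. unfold laplaceII_vec.
  apply V3_ext; cbn [c1 c2 c3 mkV vscal fst snd];
    erewrite laplaceII_gauss_tube_coord;
    eauto using is_coordinate_c1, is_coordinate_c2, is_coordinate_c3.
Qed.

Lemma ex_derive_flux_u_coeff (p s : R) : al < s < be -> cos p <> 0 ->
  ex_derive (fun t => - sqrt (Rabs (tube_detII a r t p)) / delta t p) s.
Proof.
  intros Hs Hc. pose proof (tube_factor_pos s p Hs) as Hd.
  pose proof (tube_detII_neq0 s p Hs Hc) as HD.
  assert (Hk : ex_derive kappa s) by (eexists; apply is_derive_curvature, Hs).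
  unfold tube_detII, tube_factor in *. revert Hk Hd HD. generalize kappa. intros k Hk Hd HD.
  auto_derive. repeat split; auto; try apply Rabs_pos_lt; auto; lra.
Qed.

Lemma tube_normal_dot_binormal (s q : R) : al < s < be -> dot (n s q) (B s) = sin q.
Proof.
  intros Hs. replace (B s) with (frame a s 0 0 1) by (unfold frame; vec_ring).
  rewrite tube_normal_frame, dot_frame by exact Hs. ring.
Qed.

Lemma tube_normal_dphi_dot_binormal (s q : R) : al < s < be -> dot (m s q) (B s) = cos q.
Proof.
  intros Hs. replace (B s) with (frame a s 0 0 1) by (unfold frame; vec_ring).
  rewrite tube_normal_dphi_frame, dot_frame by exact Hs. ring.
Qed.

Lemma laplaceII_gauss_tube_binormal (u p : R) : al < u < be -> cos p <> 0 ->
  dot (laplaceII_vec X (gauss X) u p) (B u) =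
  sin p * (4 * r * kappa u * cos p - 3) / (2 * r * delta u p).
Proof.
  intros Hu Hc.
  pose proof (a_curved u Hu) as Hk. pose proof (tube_factor_pos u p Hu) as Hd.
  pose proof (tube_detII_neq0 u p Hu Hc) as HD.
  destruct (ex_derive_flux_u_coeff p u Hu Hc) as [dw Hdw].
  assert (HdD : is_derive (fun q => tube_detII a r u q) p
                  (r * kappa u * sin p * (1 - 2 * r * kappa u * cos p)))
    by (unfold tube_detII, tube_factor; auto_derive; [exact I | ring]).
  pose proof (is_derive_sqrt_Rabs _ _ _ HdD HD) as HdW.
  assert (HdT : ex_derive (fun q => tau u / delta u q) p).
  { unfold tube_factor in *. auto_derive. lra. }
  destruct HdT as [dT HdT].
  pose proof (is_vder_scal _ (tangent a) u dw _ Hdw (is_vder_tangent u Hu)) as H1.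
  pose proof (is_vder_scal _ _ p _ _ HdW
    (is_vder_add _ _ p _ _ (is_vder_scal _ (fun _ => T u) p dT _ HdT (is_vder_const (T u) p))
       (is_vder_scal_const (- / r) (m u) p _ (is_vder_tube_normal_dphi_phi u p)))) as H2.
  (* [flux_u] stays in the osculating plane: only [flux_phi] has a binormal part. *)
  rewrite (laplaceII_vec_gauss_tube u p _ _ Hu Hc H1 H2).
  repeat rewrite dot_vscall || rewrite dot_vaddl.
  rewrite tangent_binormal_orth, pnormal_binormal_orth,
    tube_normal_dot_binormal, tube_normal_dphi_dot_binormal by exact Hu.
  replace (dot (mkV 0 0 0) (B u)) with 0 by (vec_unfold; ring).
  assert (HW : 0 < sqrt (Rabs (tube_detII a r u p))) by (apply sqrt_lt_R0, Rabs_pos_lt, HD).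
  set (W := sqrt (Rabs (tube_detII a r u p))) in *. clearbody W.
  unfold tube_detII, tube_factor in *. field. repeat split; lra.
Qed.

End Tube.

(** * A trigonometric rigidity lemma *)

Lemma trig_poly_coeffs_zero (k1 k2 k3 k4 c s : R) : c * c + s * s = 1 ->
  k1 * s * c + k2 * s + k3 * c + k4 * (c * c) = 0 ->
  k1 * (c * c - s * s) + k2 * c - k3 * s - 2 * k4 * s * c = 0 ->
  -4 * k1 * s * c - k2 * s - k3 * c - 2 * k4 * (c * c - s * s) = 0 ->
  -4 * k1 * (c * c - s * s) - k2 * c + k3 * s + 8 * k4 * s * c = 0 ->
  16 * k1 * s * c + k2 * s + k3 * c + 8 * k4 * (c * c - s * s) = 0 ->
  k1 = 0 /\ k2 = 0 /\ k3 = 0 /\ k4 = 0.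
Proof.
  intros Hsc H0 H1 H2 H3 H4.
  assert (Hk4 : k4 = 0).
  { pose proof (f_equal (Rmult k4) Hsc) as E. lra. }
  subst k4.
  assert (HS : k1 * (s * c) = 0) by lra.
  assert (HD : k1 * (c * c - s * s) = 0) by lra.
  (* (c^2 - s^2)^2 + (2 s c)^2 = (c^2 + s^2)^2 = 1 *)
  assert (Hk1 : k1 = 0).
  { transitivity (k1 * (c * c - s * s) * (c * c - s * s) + 4 * (k1 * (s * c)) * (s * c)).
    - replace k1 with (k1 * ((c * c + s * s) * (c * c + s * s))) at 1 by (rewrite Hsc; ring).
      ring.
    - rewrite HS, HD. ring. }
  subst k1.
  assert (E1 : k2 * s + k3 * c = 0) by lra.
  assert (E2 : k2 * c - k3 * s = 0) by lra.
  split; [reflexivity | split; [|split; [|reflexivity]]].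
  - transitivity (s * (k2 * s + k3 * c) + c * (k2 * c - k3 * s)).
    + replace k2 with (k2 * (c * c + s * s)) at 1 by (rewrite Hsc; ring). ring.
    + rewrite E1, E2. ring.
  - transitivity (c * (k2 * s + k3 * c) - s * (k2 * c - k3 * s)).
    + replace k3 with (k3 * (c * c + s * s)) at 1 by (rewrite Hsc; ring). ring.
    + rewrite E1, E2. ring.
Qed.

Lemma trig_poly_locally_zero (k1 k2 k3 k4 x0 : R) (eps : posreal) :
  (forall q, Rabs (q - x0) < eps ->
     k1 * sin q * cos q + k2 * sin q + k3 * cos q + k4 * (cos q * cos q) = 0) ->
  k1 = 0 /\ k2 = 0 /\ k3 = 0 /\ k4 = 0.
Proof.
  intros H0.
  set (g1 q := k1 * (cos q * cos q - sin q * sin q) + k2 * cos q - k3 * sin q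
               - 2 * k4 * sin q * cos q).
  set (g2 q := -4 * k1 * sin q * cos q - k2 * sin q - k3 * cos q
               - 2 * k4 * (cos q * cos q - sin q * sin q)).
  set (g3 q := -4 * k1 * (cos q * cos q - sin q * sin q) - k2 * cos q + k3 * sin q
               + 8 * k4 * sin q * cos q).
  set (g4 q := 16 * k1 * sin q * cos q + k2 * sin q + k3 * cos q
               + 8 * k4 * (cos q * cos q - sin q * sin q)).
  assert (H1 : forall q, Rabs (q - x0) < eps -> g1 q = 0).
  { apply (is_derive_vanishes_on_ball _ g1 x0 eps H0).
    intros q. unfold g1. auto_derive; [exact I | ring]. }
  assert (H2 : forall q, Rabs (q - x0) < eps -> g2 q = 0).
  { apply (is_derive_vanishes_on_ball g1 g2 x0 eps H1).
    intros q. unfold g1, g2. auto_derive; [exact I | ring]. }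
  assert (H3 : forall q, Rabs (q - x0) < eps -> g3 q = 0).
  { apply (is_derive_vanishes_on_ball g2 g3 x0 eps H2).
    intros q. unfold g2, g3. auto_derive; [exact I | ring]. }
  assert (H4 : forall q, Rabs (q - x0) < eps -> g4 q = 0).
  { apply (is_derive_vanishes_on_ball g3 g4 x0 eps H3).
    intros q. unfold g3, g4. auto_derive; [exact I | ring]. }
  assert (Hx0 : Rabs (x0 - x0) < eps) by (rewrite Rminus_diag, Rabs_R0; apply cond_pos).
  apply (trig_poly_coeffs_zero _ _ _ _ (cos x0) (sin x0) (cos2_plus_sin2 x0)).
  - exact (H0 x0 Hx0).
  - exact (H1 x0 Hx0).
  - exact (H2 x0 Hx0).
  - exact (H3 x0 Hx0).
  - exact (H4 x0 Hx0).
Qed.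

Lemma tube_profile_not_trig_linear (r k lam mu x0 : R) (eps : posreal) :
  0 < r -> 0 < r * k < 1 ->
  ~ (forall q, Rabs (q - x0) < eps ->
       sin q * (4 * r * k * cos q - 3) / (2 * r * (1 - r * k * cos q))
       = lam * cos q + mu * sin q).
Proof.
  intros Hr Hk H.
  destruct (trig_poly_locally_zero (4 * (r * k) + 2 * r * (r * k) * mu) (-3 - 2 * r * mu)
              (-2 * r * lam) (2 * r * (r * k) * lam) x0 eps) as (Hsin_cos & Hsin & _ & _).
  - intros q Hq. specialize (H q Hq). pose proof (COS_bound q).
    assert (Hden : 0 < 1 - r * k * cos q) by nra.
    assert (Hpoly : sin q * (4 * r * k * cos q - 3)
                    = (lam * cos q + mu * sin q) * (2 * r * (1 - r * k * cos q)))
      by (rewrite <- H; field; lra).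
    transitivity (sin q * (4 * r * k * cos q - 3)
                  - (lam * cos q + mu * sin q) * (2 * r * (1 - r * k * cos q))); [ring|].
    rewrite Hpoly. ring.
  - assert (E : 2 * r * mu = -3) by lra.
    replace (4 * (r * k) + 2 * r * (r * k) * mu) with (r * k * (4 + 2 * r * mu))
      in Hsin_cos by ring.
    rewrite E in Hsin_cos. lra.
Qed.

Theorem theorem1 :
  forall (a : R -> V3) (al be r : R) (W : R * R -> Prop),
    al < be ->
    smooth_curve a al be ->
    (forall u, al < u < be -> vnorm (vder a u) = 1) ->
    (forall u, al < u < be -> 0 < curvature a u) ->
    0 < r ->
    (forall u, al < u < be -> r < / curvature a u) ->
    open W ->
    (exists z, W z) ->
    (forall u p, W (u, p) -> al < u < be /\ cos p <> 0) ->
    ~ (exists A : M3, forall u p, W (u, p) ->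
         laplaceII_vec (tube a r) (gauss (tube a r)) u p
         = mapply A (gauss (tube a r) u p)).
Proof.
  intros a al be r W _ Hsm Hunit Hkp Hr Hrk HW [[u0 p0] Hz] HWc [A HA].
  destruct (HWc u0 p0 Hz) as [Hu0 _].
  destruct (HW (u0, p0) Hz) as [eps Heps].
  apply (tube_profile_not_trig_linear r (curvature a u0)
           (- dot (mapply A (pnormal a u0)) (binormal a u0))
           (- dot (mapply A (binormal a u0)) (binormal a u0)) p0 eps Hr).
  - split; [apply Rmult_lt_0_compat; auto | exact (r_curvature_lt1 a al be Hkp r Hrk u0 Hu0)].
  - intros q Hq.
    assert (Hq_in : W (u0, q)) by (apply Heps; split; [apply ball_center | exact Hq]).
    destruct (HWc u0 q Hq_in) as [_ Hcq].
    transitivity (dot (laplaceII_vec (tube a r) (gauss (tube a r)) u0 q) (binormal a u0)).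
    + symmetry. exact (laplaceII_gauss_tube_binormal a al be Hsm Hunit Hkp r Hr Hrk u0 q Hu0 Hcq).
    + rewrite HA, (gauss_tube a al be Hsm Hunit Hkp r Hr Hrk u0 q Hu0) by exact Hq_in.
      unfold mapply, tube_normal. vec_unfold. ring.
Qed.
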